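(* Let $\mathcal{D}=(\Omega,\mathcal{B})$ be a supersimple $2$-$(n,4,\lambda)$ design satisfying property $(\triangle)$, such that $(\Omega,\mathcal{C})$ is a regular two-graph, where $\mathcal{C}$ is the set of collinear triples of $\mathcal{D}$. Let $\infty\in\Omega$, $G:=\mathcal{L}_\infty(\mathcal{D})$, and $\mathcal{E}:=\{[a,b]\mid a,b\in\Omega\}$. Then $G$ is a subgroup of $\operatorname{Aut}(\mathcal{D})$, and $(G,\mathcal{E})$ is a $3$-transposition group.
   Context: A $2$-$(n,4,\lambda)$ design $(\Omega,\mathcal{B})$: $n$ points, a multiset of $4$-subsets (lines), every $2$-subset in exactly $\lambda$ lines; supersimple: distinct lines meet in at most two points. For distinct $a,b$ with lines $\{a,b,a_i,b_i\}$ ($1\le i\le\lambda$) through them, the elementary move is $[a,b]:=(a,b)\prod_i(a_i,b_i)$; $[a,a]:=1$. Permutations act on the right, products composed left to right; $[a_0,\dots,a_k]:=[a_0,a_1]\cdots[a_{k-1},a_k]$; $\mathcal{L}_\infty(\mathcal{D})$ is the set of all move sequences $[\infty,a_1,\dots,a_k]$, $k\ge1$. Property $(\triangle)$: if $B_1,B_2\in\mathcal{B}$ with $|B_1\cap B_2|=2$ then $B_1\triangle B_2\in\mathcal{B}$. Collinear triple: $3$-subset contained in a line. Regular two-graph: $(\Omega,\mathcal{C})$ is a $2$-$(n,3,\mu)$ design with every $4$-subset containing $0$, $2$ or $4$ members of $\mathcal{C}$. A $3$-transposition group is a pair $(G,\mathcal{E})$, $\mathcal{E}$ a set of involutions with $G=\langle\mathcal{E}\rangle$,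 $\mathcal{E}$ a union of $G$-conjugacy classes, and $gh$ of order $1,2$ or $3$ for all $g,h\in\mathcal{E}$. *)

From mathcomp Require Import all_boot all_fingroup.
Set Implicit Arguments. Unset Strict Implicit. Unset Printing Implicit Defensive.

Section Designs.
Variable T : finType.
Implicit Types (B : seq {set T}) (L : {set T}) (a b x y : T).

(* A 2-(n,4,lambda) design with n = #|T| : the (multi)set of lines B is a
   sequence of 4-subsets; every 2-subset {x,y} lies in exactly lambda lines
   (counted with multiplicity). *)
Definition is_2design_4 B (lam : nat) : Prop :=
  (forall L, L \in B -> #|L| = 4) /\
  (forall x y, x != y -> count (fun L : {set T} => (x \in L) && (y \in L)) B = lam).

(* supersimple: distinct lines (distinct entries of the multiset) meet in
   at most two points *)
Definition supersimple B : Prop :=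
  forall i j, i < size B -> j < size B -> i != j ->
    #|nth set0 B i :&: nth set0 B j| <= 2.

Definition prop_triangle B : Prop :=
  forall B1 B2 : {set T}, B1 \in B -> B2 \in B -> #|B1 :&: B2| = 2 ->
    ((B1 :\: B2) :|: (B2 :\: B1)) \in B.

Definition collinear_triples B : {set {set T}} :=
  [set S : {set T} | (#|S| == 3) && has (fun L : {set T} => S \subset L) B].

Definition regular_two_graph (C : {set {set T}}) : Prop :=
  (forall S, S \in C -> #|S| = 3) /\
  (exists mu : nat, forall x y, x != y ->
      #|[set S in C | (x \in S) && (y \in S)]| = mu) /\
  (forall F : {set T}, #|F| = 4 ->
      #|[set S in C | S \subset F]| \in [:: 0; 2; 4]).

Local Open Scope group_scope.

Definition other1 L a b : T := nth a (enum (L :\: [set a; b])) 0.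
Definition other2 L a b : T := nth a (enum (L :\: [set a; b])) 1.

(* elementary move [a,b] = (a,b) prod_i (a_i,b_i); [a,a] = 1.
   Permutations act on the right; s * t means "first s, then t". *)
Definition move B a b : {perm T} :=
  if a == b then 1 else
  tperm a b * \prod_(L <- B | (a \in L) && (b \in L)) tperm (other1 L a b) (other2 L a b).

Fixpoint move_path B a (s : seq T) : {perm T} :=
  match s with
  | [::] => 1
  | c :: s' => move B a c * move_path B c s'
  end.

Definition in_Linf B (inf : T) (g : {perm T}) : Prop :=
  exists s : seq T, s != [::] /\ g = move_path B inf s.

Definition is_aut B (g : {perm T}) : Prop :=
  perm_eq [seq g @: L | L <- B] B.

Definition moves_set B : {set {perm T}} :=
  [set move B ab.1 ab.2 | ab in [set ab : T * T | ab.1 != ab.2]].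

End Designs.

Definition three_transposition_group (gT : finGroupType)
    (G : {group gT}) (E : {set gT}) : Prop :=
  (forall e, e \in E -> #[e]%g = 2) /\
  (<<E>>%g = G :> {set gT}) /\
  (forall e g, e \in E -> g \in G -> (e ^ g)%g \in E) /\
  (forall e f, e \in E -> f \in E -> #[(e * f)%g]%g \in [:: 1; 2; 3]).

From mathcomp Require Import all_boot all_fingroup cyclic.
Set Implicit Arguments. Unset Strict Implicit. Unset Printing Implicit Defensive.

(* The move [a,b] swaps a and b, swaps the two remaining points of every line
   through a and b, and fixes all other points; it is an involution, and all
   moves of pairs on a common line coincide.  It maps every line K to a line:
   if a lies on K, a case analysis on the points of K that it displaces shows
   that the image is K plus (over GF(2)) some lines through a and b, which
   property (triangle) keeps in the design, the remaining cases being excluded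
   because a regular two-graph puts an even number of collinear triples on any
   four points; if neither a nor b lies on K, K is the sum of two lines
   through a.  Hence moves are
   automorphisms and conjugation permutes them, [a,b]^g = [a^g,b^g].  Two moves
   displacing a common point z can be written [z,q], [z,r], and their product
   has order 2 or 3 according as z, q, r are collinear or not; moves with
   disjoint supports commute.  Finally every move is a move sequence from any
   starting point, so the moves generate L_infinity. *)

Section FiniteSets.

Variable T : finType.
Implicit Types (p q r s t x : T) (F S : {set T}).

Lemma card_set3 p q r : p != q -> p != r -> q != r -> #|[set p; q; r]| = 3.
Proof.
by move=> pq pr qr; rewrite -setUA !cardsU1 cards1 !inE (negPf pq) (negPf pr) (negPf qr).
Qed.

Lemma card_set3_le p q r : #|[set p; q; r]| <= 3.
Proof. by rewrite -setUA !cardsU1 cards1; case: (p \notin _); case: (q \notin _). Qed.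

Lemma card_set4 p q r s : p != q -> p != r -> p != s -> q != r -> q != s -> r != s ->
  #|[set p; q; r; s]| = 4.
Proof.
move=> pq pr ps qr qs rs.
by rewrite -!setUA !cardsU1 cards1 !inE (negPf pq) (negPf pr) (negPf ps) (negPf qr)
  (negPf qs) (negPf rs).
Qed.

Lemma setD1_eq_of_card F S x : #|F| = 4 -> x \in F -> #|S| = 3 -> S \subset F ->
  x \notin S -> F :\ x = S.
Proof.
move=> F4 xF S3 SF xS; apply/esym/eqP.
have FxS : #|F :\ x| = #|S| by move: F4; rewrite (cardsD1 x) xF S3 => -[].
rewrite eqEcard FxS leqnn andbT.
by apply/subsetP => t tS; rewrite !inE (subsetP SF) // andbT; apply: contraNneq xS => <-.
Qed.

Lemma card_3subsets_of4 (C : {set {set T}}) F : #|F| = 4 -> {in C, forall S, #|S| = 3} ->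
  #|[set S in C | S \subset F]| = #|[set t in F | F :\ t \in C]|.
Proof.
move=> F4 C3.
have injD : {in [set t in F | F :\ t \in C] &, injective (fun t => F :\ t)}.
  move=> t u; rewrite !inE => /andP [tF _] _ /= /setP /(_ t).
  by rewrite !inE eqxx tF andbT; case: eqP.
rewrite -(card_in_imset injD); apply: eq_card => S; rewrite !inE.
apply/andP/imsetP => [[SC SF] | [t]]; last first.
  by rewrite inE => /andP [_ DC] ->; rewrite DC subD1set.
have : S \proper F by rewrite properEcard SF C3 // F4.
case/properP => _ [t tF tS].
have DS := setD1_eq_of_card F4 tF (C3 S SC) SF tS.
by exists t => //; rewrite inE tF DS.
Qed.

Definition symdiff (K L : {set T}) := (K :\: L) :|: (L :\: K).

Lemma in_symdiff t (K L : {set T}) : (t \in symdiff K L) = (t \in K) (+) (t \in L).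
Proof. by rewrite !inE; case: (t \in K); case: (t \in L). Qed.

Lemma symdiffK (K L : {set T}) : symdiff K (symdiff K L) = L.
Proof. by apply/setP => t; rewrite !in_symdiff addKb. Qed.

Lemma mem_perm_imset (g : {perm T}) t (A : {set T}) : (g t \in g @: A) = (t \in A).
Proof. exact: mem_imset perm_inj. Qed.

Lemma imset_symdiff (g : {perm T}) (K L : {set T}) : g @: symdiff K L = symdiff (g @: K) (g @: L).
Proof. by apply/setP => t; rewrite -[t](permKV g) !(in_symdiff, mem_perm_imset). Qed.

End FiniteSets.

Section InvolutionProducts.

Variable gT : finGroupType.
Implicit Types e f g : gT.
Local Open Scope group_scope.

Lemma order123_expg2 g : g ^+ 2 = 1 -> #[g] \in [:: 1; 2; 3]%N.
Proof.
move=> g2; have : #[g] %| 2 by rewrite order_dvdn g2 eqxx.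
by have := order_gt0 g; case: #[g] => [|[|[|n]]].
Qed.

Lemma order123_expg3 g : g ^+ 3 = 1 -> #[g] \in [:: 1; 2; 3]%N.
Proof.
move=> g3; have : #[g] %| 3 by rewrite order_dvdn g3 eqxx.
by have := order_gt0 g; case: #[g] => [|[|[|[|n]]]].
Qed.

Lemma expg2_mul_conj_involution e f : f * f = 1 -> e * f * e = f -> (e * f) ^+ 2 = 1.
Proof. by move=> ff efe; rewrite expgS expg1 mulgA efe ff. Qed.

Lemma mulg_braid_cycle e f g : f * f = 1 -> e * f * e = g -> f * e * f = g -> e * (g * f) = g.
Proof. by move=> ff <- efe; rewrite -{1}efe -!mulgA ff mulg1 !mulgA. Qed.

Lemma expg3_mul_braided_involutions e f : e * e = 1 -> f * f = 1 ->
  e * f * e = f * e * f -> (e * f) ^+ 3 = 1.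
Proof.
move=> ee ff efe; rewrite expgS expgS expg1.
have -> : e * f * (e * f * (e * f)) = (e * f * e) * (f * e * f) by rewrite !mulgA.
by rewrite -efe -!mulgA (mulgA e e) ee mul1g (mulgA f f) ff mul1g ee.
Qed.

End InvolutionProducts.

Section Design.

Variables (T : finType) (B : seq {set T}).
Hypothesis card_line : forall L, L \in B -> #|L| = 4.
Hypothesis B_supersimple : supersimple B.
Hypothesis B_triangle : prop_triangle B.
Hypothesis B_two_graph : regular_two_graph (collinear_triples B).

Implicit Types (a b p q r u v w x y z : T) (K L J : {set T}).

Lemma uniq_lines : uniq B.
Proof.
apply/negPn/negP => /(uniqPn set0) [i [j [ij jB Eij]]].
have iB : i < size B by apply: ltn_trans jB.
have := B_supersimple iB jB (negbT (ltn_eqF ij)).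
by rewrite Eij setIid card_line // mem_nth.
Qed.

Lemma card_meet_lines K L : K \in B -> L \in B -> K != L -> #|K :&: L| <= 2.
Proof.
move=> KB LB KL.
have iK : index K B < size B by rewrite index_mem.
have iL : index L B < size B by rewrite index_mem.
have := B_supersimple iK iL; rewrite !nth_index //; apply.
by apply: contra KL => /eqP /(congr1 (nth set0 B)); rewrite !nth_index // => ->.
Qed.

Lemma eq_lines_of3 K L p q r : K \in B -> L \in B -> p != q -> p != r -> q != r ->
  p \in K -> q \in K -> r \in K -> p \in L -> q \in L -> r \in L -> K = L.
Proof.
move=> KB LB pq pr qr pK qK rK pL qL rL; apply/eqP/negPn/negP => KL.
have := card_meet_lines KB LB KL; rewrite leqNgt => /negP; apply.
rewrite -(card_set3 pq pr qr) subset_leq_card //.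
by rewrite !subUset !sub1set !inE pK qK rK pL qL rL.
Qed.

Lemma line_point_off3 K p q r : K \in B ->
  exists2 w, w \in K & [&& w != p, w != q & w != r].
Proof.
move=> KB; have : 0 < #|K :\: [set p; q; r]|.
  rewrite cardsD card_line // subn_gt0 ltnS.
  exact: leq_trans (subset_leq_card (subsetIr _ _)) (card_set3_le p q r).
case/card_gt0P => w; rewrite !inE !negb_or -!andbA => /and4P [wp wq wr wK].
by exists w => //; apply/and3P.
Qed.

Lemma line_fourth_uniq K p q r w w' : K \in B -> p != q -> p != r -> q != r ->
  p \in K -> q \in K -> r \in K ->
  w \in K -> [&& w != p, w != q & w != r] ->
  w' \in K -> [&& w' != p, w' != q & w' != r] -> w = w'.
Proof.
move=> KB pq pr qr pK qK rK wK wpqr w'K w'pqr.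
have : #|K :\: [set p; q; r]| = 1.
  rewrite cardsD (setIidPr _) ?card_set3 ?card_line //.
  by rewrite !subUset !sub1set pK qK rK.
move/eqP/cards1P => [t Kt].
have inKt x : x \in K -> [&& x != p, x != q & x != r] -> x = t.
  move=> xK xpqr; apply/set1P; rewrite -Kt !inE xK andbT.
  by case/and3P: xpqr => /negPf -> /negPf -> /negPf ->.
by rewrite (inKt w wK wpqr) (inKt w' w'K w'pqr).
Qed.

Lemma symdiff_line K L u v w : K \in B -> L \in B -> u != v ->
  u \in K -> v \in K -> u \in L -> v \in L -> w \in K -> w \notin L ->
  symdiff K L \in B.
Proof.
move=> KB LB uv uK vK uL vL wK wL.
have KL : K != L by apply: contraNneq wL => <-.
apply: B_triangle => //; apply/eqP; rewrite eqn_leq card_meet_lines //=.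
have := subset_leq_card (_ : [set u; v] \subset K :&: L); rewrite cards2 uv; apply.
by rewrite !subUset !sub1set !inE uK vK uL vL.
Qed.

Definition collinear a b c := has (fun L => [&& a \in L, b \in L & c \in L]) B.

Lemma collinearP a b c :
  reflect (exists2 L, L \in B & [&& a \in L, b \in L & c \in L]) (collinear a b c).
Proof. exact: hasP. Qed.

Lemma collinearC12 a b c : collinear a b c = collinear b a c.
Proof. by apply: eq_has => L; rewrite /= !andbA (andbC (a \in L)). Qed.

Lemma collinearC23 a b c : collinear a b c = collinear a c b.
Proof. by apply: eq_has => L; rewrite /= (andbC (b \in L)). Qed.

Lemma collinear_triplesE p q r : p != q -> p != r -> q != r ->
  ([set p; q; r] \in collinear_triples B) = collinear p q r.
Proof.
move=> pq pr qr; rewrite inE card_set3 // eqxx /=.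
by apply: eq_has => L /=; rewrite !subUset !sub1set andbA.
Qed.

Lemma collinear_parity p q r s : p != q -> p != r -> p != s -> q != r -> q != s -> r != s ->
  ~~ odd (collinear q r s + collinear p r s + collinear p q s + collinear p q r).
Proof.
move=> pq pr ps qr qs rs.
have [qp rp sp] : [/\ q != p, r != p & s != p] by rewrite !(eq_sym _ p).
have [rq sq sr] : [/\ r != q, s != q & s != r] by rewrite !(eq_sym _ q) (eq_sym s).
have [C3 [_ evenC]] := B_two_graph.
pose F := [set p; q; r; s]; have F4 : #|F| = 4 := card_set4 pq pr ps qr qs rs.
have FD x y z t : x \in F -> [set y; z; t] \subset F -> x != y -> x != z -> x != t ->
    y != z -> y != t -> z != t -> F :\ x = [set y; z; t].
  move=> xF sF xy xz xt yz yt zt; apply: setD1_eq_of_card; rewrite ?card_set3 //.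
  by rewrite !inE !negb_or xy xz xt.
have := evenC F F4; rewrite card_3subsets_of4 //.
set P := fun t => F :\ t \in collinear_triples B.
have -> : [set t in F | P t] = [set:: [seq t <- [:: p; q; r; s] | P t]].
  by apply/setP => t; rewrite !inE mem_filter andbC !inE -!orbA.
rewrite cardsE (card_uniqP _) ?filter_uniq ?size_filter //=; last first.
  by rewrite !inE !negb_or pq pr ps qr qs rs.
rewrite /P (FD p q r s) ?(FD q p r s) ?(FD r p q s) ?(FD s p q r) ?collinear_triplesE //;
  try by rewrite /F ?subUset ?sub1set !inE ?eqxx ?orbT.
by rewrite addn0 !addnA !inE => /or3P [] /eqP ->.
Qed.

Local Open Scope group_scope.

Lemma other_points L a b : L \in B -> a != b -> a \in L -> b \in L ->
  [/\ other1 L a b \in L, other2 L a b \in L, other1 L a b != other2 L a b,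
      [&& other1 L a b != a, other1 L a b != b, other2 L a b != a & other2 L a b != b] &
      forall t, t \in L -> t != a -> t != b -> t = other1 L a b \/ t = other2 L a b].
Proof.
move=> LB ab aL bL.
have S2 : #|L :\: [set a; b]| = 2.
  have := card_line LB; rewrite (cardsD1 a) aL (cardsD1 b) !inE eq_sym ab bL /=.
  by rewrite setDDl => -[].
rewrite /other1 /other2; move: (enum_uniq (mem (L :\: [set a; b]))).
move: (mem_enum (mem (L :\: [set a; b]))); move: S2; rewrite cardE.
case: (enum _) => [|x [|y [|z s]]] //= _ Hm; rewrite !inE andbT => xy.
have := Hm x; have := Hm y; rewrite !inE !eqxx orbT /=.
move=> /esym /andP [/norP [ya yb] yL] /esym /andP [/norP [xa xb] xL].
split => //; first by rewrite xa xb ya yb.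
move=> t tL ta tb; have := Hm t; rewrite !inE (negPf ta) (negPf tb) tL /=.
by case/orP => /eqP ->; [left | right].
Qed.

Definition line_swaps a b (s : seq {set T}) : {perm T} :=
  \prod_(L <- s | (a \in L) && (b \in L)) tperm (other1 L a b) (other2 L a b).

Lemma moveE a b : a != b -> move B a b = tperm a b * line_swaps a b B.
Proof. by rewrite /move => /negPf ->. Qed.

Lemma tperm_other_point L a b z : L \in B -> a != b -> a \in L -> b \in L ->
  z \in L -> z != a -> z != b ->
  let w := tperm (other1 L a b) (other2 L a b) z in [/\ w \in L, w != a, w != b & w != z].
Proof.
move=> LB ab aL bL zL za zb /=.
have [o1L o2L o12 /and4P [o1a o1b o2a o2b] H] := other_points LB ab aL bL.
case: (H z zL za zb) => ->; [rewrite tpermL | rewrite tpermR]; split => //.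
by rewrite eq_sym.
Qed.

Lemma line_swaps_id a b (s : seq {set T}) z : a != b -> {subset s <= B} ->
  (forall L, L \in s -> a \in L -> b \in L -> z \in L -> z = a \/ z = b) ->
  line_swaps a b s z = z.
Proof.
move=> ab; rewrite /line_swaps; elim: s => [|K s IH] sB H; first by rewrite big_nil perm1.
rewrite big_cons; have KB : K \in B by apply: sB; rewrite inE eqxx.
have IHs : line_swaps a b s z = z.
  by apply: IH => [L Ls | L Ls]; [apply: sB | apply: H]; rewrite inE Ls orbT.
case: ifP => [/andP [aK bK] | _]; last exact: IHs.
rewrite permM -[RHS]IHs; congr (_ _).
have [o1K o2K _ /and4P [o1a o1b o2a o2b] _] := other_points KB ab aK bK.
case: (boolP (z \in K)) => zK.
  by have [] := H K (mem_head _ _) aK bK zK => ->; rewrite tpermD // eq_sym.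
by rewrite tpermD //; apply: contraNneq zK => <-.
Qed.

Lemma line_swaps_on_line a b (s : seq {set T}) L z : a != b -> uniq s -> {subset s <= B} ->
  L \in s -> a \in L -> b \in L -> z \in L -> z != a -> z != b ->
  line_swaps a b s z = tperm (other1 L a b) (other2 L a b) z.
Proof.
move=> ab; rewrite /line_swaps.
elim: s => [|K s IH] //= /andP [Ks us] sB Ls aL bL zL za zb.
have sB' : {subset s <= B} by move=> M Ms; apply: sB; rewrite inE Ms orbT.
have KB : K \in B by apply: sB; rewrite inE eqxx.
have LB : L \in B by apply: sB.
rewrite big_cons; case: (eqVneq L K) => [LK | LK].
  rewrite -LK aL bL /= permM; apply: line_swaps_id => // M Ms aM bM wM.
  have [wL wa wb wz] := tperm_other_point LB ab aL bL zL za zb.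
  have MB := sB' M Ms.
  have ML : M = L by apply: (eq_lines_of3 MB LB ab _ _ aM bM wM aL bL wL); rewrite eq_sym.
  by move: Ks; rewrite -LK -ML Ms.
have Ls' : L \in s by move: Ls; rewrite inE (negPf LK).
case: ifP => [/andP [aK bK] | _]; last exact: IH.
rewrite permM -(IH us sB' Ls' aL bL zL za zb); congr (_ _).
have zK : z \notin K.
  apply: contra LK => zK; apply/eqP.
  by apply: (eq_lines_of3 LB KB ab _ _ aL bL zL aK bK zK); rewrite eq_sym.
have [o1K o2K _ _ _] := other_points KB ab aK bK.
by rewrite tpermD //; apply: contraNneq zK => <-.
Qed.

Lemma moveL a b : move B a b a = b.
Proof.
case: (eqVneq a b) => [-> | ab]; first by rewrite /move eqxx perm1.
by rewrite moveE // permM tpermL; apply: line_swaps_id => // L _ _ _ _; right.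
Qed.

Lemma moveR a b : move B a b b = a.
Proof.
case: (eqVneq a b) => [-> | ab]; first by rewrite /move eqxx perm1.
by rewrite moveE // permM tpermR; apply: line_swaps_id => // L _ _ _ _; left.
Qed.

Lemma move_on_line a b z L : a != b -> L \in B -> a \in L -> b \in L -> z \in L ->
  z != a -> z != b ->
  [/\ move B a b z \in L, move B a b z != a, move B a b z != b & move B a b z != z].
Proof.
move=> ab LB aL bL zL za zb.
have [az bz] : a != z /\ b != z by rewrite !(eq_sym _ z).
rewrite moveE // permM tpermD // (line_swaps_on_line ab uniq_lines _ LB) //.
exact: (tperm_other_point LB ab aL bL zL za zb).
Qed.

Lemma move_noncollinear a b z : z != a -> z != b -> ~~ collinear a b z -> move B a b z = z.
Proof.
move=> za zb nc; case: (eqVneq a b) => [<- | ab]; first by rewrite /move eqxx perm1.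
have [az bz] : a != z /\ b != z by rewrite !(eq_sym _ z).
rewrite moveE // permM tpermD //; apply: line_swaps_id => // L LB aL bL zL.
by case/negP: nc; apply/collinearP; exists L; rewrite ?aL ?bL.
Qed.

Lemma move_fourth_point a b z t L : a != b -> L \in B -> a \in L -> b \in L -> z \in L ->
  z != a -> z != b -> t \in L -> t != a -> t != b -> t != z -> move B a b z = t.
Proof.
move=> ab LB aL bL zL za zb tL ta tb tz.
have [wL wa wb wz] := move_on_line ab LB aL bL zL za zb.
have [az bz] : a != z /\ b != z by rewrite !(eq_sym _ z).
by apply: (line_fourth_uniq LB ab az bz aL bL zL); rewrite ?wa ?wb ?wz ?ta ?tb ?tz.
Qed.

Lemma collinear_of_moved a b z : move B a b z != z -> z != a -> z != b -> collinear a b z.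
Proof. by move=> mz za zb; apply: contraR mz => nc; rewrite move_noncollinear. Qed.

Lemma moveC a b : move B a b = move B b a.
Proof.
case: (eqVneq a b) => [-> // | ab]; apply/permP => z.
case: (eqVneq z a) => [-> | za]; first by rewrite moveL moveR.
case: (eqVneq z b) => [-> | zb]; first by rewrite moveL moveR.
case: (boolP (collinear a b z)) => [/collinearP [L LB /and3P [aL bL zL]] | nc].
  have [wL wa wb wz] := move_on_line ab LB aL bL zL za zb.
  by symmetry; apply: (move_fourth_point _ LB) => //; rewrite eq_sym.
by rewrite !move_noncollinear // -collinearC12.
Qed.

Lemma moveK a b : involutive (move B a b).
Proof.
move=> z; case: (eqVneq a b) => [-> | ab]; first by rewrite /move eqxx !perm1.
case: (eqVneq z a) => [-> | za]; first by rewrite moveL moveR.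
case: (eqVneq z b) => [-> | zb]; first by rewrite moveR moveL.
case: (boolP (collinear a b z)) => [/collinearP [L LB /and3P [aL bL zL]] | nc].
  have [wL wa wb wz] := move_on_line ab LB aL bL zL za zb.
  by apply: (move_fourth_point _ LB) => //; rewrite eq_sym.
by rewrite !move_noncollinear.
Qed.

Lemma mulg_move_self a b : move B a b * move B a b = 1.
Proof. by apply/permP => z; rewrite permM moveK perm1. Qed.

Lemma invg_move a b : (move B a b)^-1 = move B a b.
Proof. by apply: (mulgI (move B a b)); rewrite mulgV mulg_move_self. Qed.

Lemma move_off_common_line a b c d z L : L \in B ->
  a != b -> a != c -> a != d -> b != c -> b != d -> c != d ->
  a \in L -> b \in L -> c \in L -> d \in L -> z \notin L -> collinear a b z ->
  move B c d z = move B a b z.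
Proof.
move=> LB ab ac ad bc bd cd aL bL cL dL zL /collinearP [M MB /and3P [aM bM zM]].
have [za zb] : z != a /\ z != b by split; apply: contraNneq zL => ->.
have [wM wa wb wz] := move_on_line ab MB aM bM zM za zb.
set w := move B a b z in wM wa wb wz *.
have offM t : t \in L -> t != a -> t != b -> t \notin M.
  move=> tL ta tb; apply: contraNN zL => tM.
  by rewrite (eq_lines_of3 LB MB ab _ _ aL bL tL aM bM tM) // eq_sym.
have wL : w \notin L.
  apply: contraNN zL => wL.
  by rewrite (eq_lines_of3 LB MB ab _ _ aL bL wL aM bM wM) // eq_sym.
have [ca cb] : c != a /\ c != b by rewrite !(eq_sym c).
have [da db] : d != a /\ d != b by rewrite !(eq_sym d).
have [cM dM] := (offM c cL ca cb, offM d dL da db).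
have offL t : t \notin L -> t != c /\ t != d by move=> tL; split; apply: contraNneq tL => ->.
have [[zc zd] [wc wd]] := (offL z zL, offL w wL).
have JB := symdiff_line LB MB ab aL bL aM bM cL cM.
by apply: (move_fourth_point cd JB);
  rewrite ?in_symdiff ?cL ?dL ?zM ?wM ?(negPf cM) ?(negPf dM) ?(negPf zL) ?(negPf wL).
Qed.

Lemma move_on_common_line a b c d L : L \in B ->
  a != b -> a != c -> a != d -> b != c -> b != d -> c != d ->
  a \in L -> b \in L -> c \in L -> d \in L -> move B a b = move B c d.
Proof.
move=> LB ab ac ad bc bd cd aL bL cL dL; apply/permP => z.
case: (boolP (z \in L)) => zL.
  have [ba ca da] : [/\ b != a, c != a & d != a] by rewrite !(eq_sym _ a).
  have [cb db dc] : [/\ c != b, d != b & d != c] by rewrite !(eq_sym _ b) (eq_sym d).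
  have fourth := move_fourth_point _ LB.
  case: (eqVneq z a) => [-> | za]; first by rewrite moveL (fourth c d a b).
  case: (eqVneq z b) => [-> | zb]; first by rewrite moveR (fourth c d b a).
  case: (eqVneq z c) => [-> | zc]; first by rewrite moveL (fourth a b c d).
  have zd : z = d by apply: (line_fourth_uniq LB ab ac bc aL bL cL); rewrite ?za ?zb ?zc ?da ?db ?dc.
  by rewrite zd moveR (fourth a b d c).
case: (boolP (collinear a b z)) => abz; first by rewrite (move_off_common_line LB ab ac ad bc bd cd).
case: (boolP (collinear c d z)) => cdz.
  by rewrite (move_off_common_line LB cd _ _ _ _ ab cL dL aL bL) // 1?eq_sym.
have [za zb] : z != a /\ z != b by split; apply: contraNneq zL => ->.
have [zc zd] : z != c /\ z != d by split; apply: contraNneq zL => ->.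
by rewrite !move_noncollinear.
Qed.

Lemma move_through_image a b z : move B a b z != z -> move B z (move B a b z) = move B a b.
Proof.
case: (eqVneq a b) => [<- | ab]; first by rewrite /move eqxx perm1 eqxx.
case: (eqVneq z a) => [-> | za]; first by rewrite moveL.
case: (eqVneq z b) => [-> _ | zb mz]; first by rewrite moveR moveC.
have /collinearP [L LB /and3P [aL bL zL]] := collinear_of_moved mz za zb.
have [wL wa wb wz] := move_on_line ab LB aL bL zL za zb.
by symmetry; apply: (move_on_common_line LB); rewrite // eq_sym.
Qed.

Lemma perm_imset_line (g : {perm T}) K J a x y z : K \in B -> J \in B ->
  a != x -> a != y -> a != z -> x != y -> x != z -> y != z ->
  a \in K -> x \in K -> y \in K -> z \in K ->
  g a \in J -> g x \in J -> g y \in J -> g z \in J -> g @: K \in B.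
Proof.
move=> KB JB ax ay az xy xz yz aK xK yK zK gaJ gxJ gyJ gzJ.
have gS4 : #|[set g a; g x; g y; g z]| = 4 by rewrite card_set4 ?(inj_eq perm_inj).
have gSJ : [set g a; g x; g y; g z] = J.
  by apply/eqP; rewrite eqEcard gS4 card_line // !subUset !sub1set gaJ gxJ gyJ gzJ.
suff -> : g @: K = J by [].
apply/esym/eqP; rewrite eqEcard card_imset ?card_line //; last exact: perm_inj.
by rewrite -gSJ !subUset !sub1set !imset_f.
Qed.

Lemma fixed_off_line a b t L : a != b -> L \in B -> a \in L -> b \in L ->
  t != a -> t != b -> move B a b t = t -> t \notin L.
Proof.
move=> ab LB aL bL ta tb mt; apply/negP => tL.
by have [_ _ _] := move_on_line ab LB aL bL tL ta tb; rewrite mt eqxx.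
Qed.

Lemma fixed_noncollinear a b t : a != b -> t != a -> t != b -> move B a b t = t ->
  ~~ collinear a b t.
Proof.
move=> ab ta tb mt; apply/collinearP => -[L LB /and3P [aL bL tL]].
by move: tL; apply/negP; apply: fixed_off_line mt.
Qed.

Lemma moved_line a b t : a != b -> t != a -> t != b -> move B a b t != t ->
  exists2 L, L \in B & [/\ a \in L, b \in L, t \in L & move B a b t \in L].
Proof.
move=> ab ta tb mt; have /collinearP [L LB /and3P [aL bL tL]] := collinear_of_moved mt ta tb.
by exists L => //; have [] := move_on_line ab LB aL bL tL ta tb.
Qed.

Lemma move_imset_line_through_both a b K : K \in B -> a \in K -> b \in K ->
  move B a b @: K \in B.
Proof.
move=> KB aK bK; suff -> : move B a b @: K = K by [].
apply/eqP; rewrite eqEcard card_imset ?leqnn ?andbT; last exact: perm_inj.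
apply/subsetP => _ /imsetP [t tK ->].
case: (eqVneq a b) => [<- | ab]; first by rewrite /move eqxx perm1.
case: (eqVneq t a) => [-> | ta]; first by rewrite moveL.
case: (eqVneq t b) => [-> | tb]; first by rewrite moveR.
by have [] := move_on_line ab KB aK bK tK ta tb.
Qed.

Lemma image_off_line a b u L M : a != b -> L \in B -> M \in B -> a \in L -> b \in L ->
  u \in L -> a \in M -> b \in M -> u != a -> u != b -> u \notin M -> move B a b u \notin M.
Proof.
move=> ab LB MB aL bL uL aM bM ua ub; apply: contraNN => u'M.
have [u'L u'a u'b _] := move_on_line ab LB aL bL uL ua ub.
by rewrite (eq_lines_of3 MB LB (p := a) (q := b) (r := move B a b u)) // eq_sym.
Qed.

Section MoveFromLine.

Variables (a b x y z : T) (K : {set T}).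
Hypotheses (KB : K \in B) (aK : a \in K) (bK : b \notin K)
  (xK : x \in K) (yK : y \in K) (zK : z \in K)
  (ax : a != x) (ay : a != y) (az : a != z) (xy : x != y) (xz : x != z) (yz : y != z).

Local Notation s := (move B a b).

Let ab : a != b. Proof. by apply: contraNneq bK => <-. Qed.
Let xa : x != a. Proof. by rewrite eq_sym. Qed.
Let ya : y != a. Proof. by rewrite eq_sym. Qed.
Let za : z != a. Proof. by rewrite eq_sym. Qed.
Let xb : x != b. Proof. by apply: contraNneq bK => <-. Qed.
Let yb : y != b. Proof. by apply: contraNneq bK => <-. Qed.
Let zb : z != b. Proof. by apply: contraNneq bK => <-. Qed.

Lemma off_line_through_ab L u v : L \in B -> a \in L -> b \in L -> u \in L ->
  u != a -> v != a -> u != v -> u \in K -> v \in K -> v \notin L.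
Proof.
move=> LB aL bL uL ua va uv uK vK; apply: contraNN bK => vL.
by rewrite (eq_lines_of3 KB LB (p := a) (q := u) (r := v)) // 1?eq_sym.
Qed.

Lemma image_off_K L u : L \in B -> a \in L -> b \in L -> u \in L -> s u \in L ->
  u != a -> u != b -> u \in K -> s u \notin K.
Proof.
move=> LB aL bL uL u'L ua ub uK.
have [_ u'a _ u'u] := move_on_line ab LB aL bL uL ua ub.
by apply: contraL u'L => u'K; apply: (off_line_through_ab LB aL bL uL); rewrite // eq_sym.
Qed.

Lemma off_moved_line L M u v : L \in B -> M \in B -> a \in L -> b \in L -> u \in L ->
  a \in M -> b \in M -> v \in M -> u \in K -> v \in K -> u != a -> v != a -> u != v ->
  v \notin L /\ s v \notin L.
Proof.
move=> LB MB aL bL uL aM bM vM uK vK ua va uv.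
have vL := off_line_through_ab LB aL bL uL ua va uv uK vK.
split=> //; apply: (image_off_line ab MB LB aM bM vM aL bL va) => //.
by apply: contraNneq bK => <-.
Qed.

Lemma imset_line_one_moved : s x != x -> s y = y -> s z = z -> s @: K \in B.
Proof.
move=> mx fy fz.
have [L LB [aL bL xL x'L]] := moved_line ab xa xb mx.
have x'K := image_off_K LB aL bL xL x'L xa xb xK.
have yL := fixed_off_line ab LB aL bL ya yb fy.
have zL := fixed_off_line ab LB aL bL za zb fz.
have JB := symdiff_line KB LB ax aK xK aL xL yK yL.
apply: (perm_imset_line KB JB ax ay az xy xz yz aK xK yK zK);
  by rewrite ?moveL ?fy ?fz in_symdiff ?bL ?x'L ?yK ?zK ?(negPf bK) ?(negPf x'K) ?(negPf yL)
     ?(negPf zL).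
Qed.

Lemma two_moved_absurd : s x != x -> s y != y -> s z = z -> False.
Proof.
move=> mx my fz.
have [L LB [aL bL xL _]] := moved_line ab xa xb mx.
have yL := off_line_through_ab LB aL bL xL xa ya xy xK yK.
have zL := fixed_off_line ab LB aL bL za zb fz.
have JB := symdiff_line KB LB ax aK xK aL xL zK zL.
have byz : collinear b y z.
  apply/collinearP; exists (symdiff K L) => //.
  by rewrite !in_symdiff bL yK zK (negPf bK) (negPf yL) (negPf zL).
have ayz : collinear a y z by apply/collinearP; exists K; rewrite ?aK ?yK ?zK.
have [b_y bz] : b != y /\ b != z by rewrite !(eq_sym b).
have := collinear_parity ab ay az b_y bz yz.
by rewrite byz ayz (negPf (fixed_noncollinear ab za zb fz)) (collinear_of_moved my ya yb).
Qed.

Lemma imset_line_none_moved : s x = x -> s y = y -> s z = z -> s @: K \in B.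
Proof.
move=> fx fy fz.
have [bx b_y] : b != x /\ b != y by rewrite !(eq_sym b).
have /collinearP [J JB /and3P [bJ xJ yJ]] : collinear b x y.
  have := collinear_parity ab ax ay bx b_y xy.
  have axy : collinear a x y by apply/collinearP; exists K; rewrite ?aK ?xK ?yK.
  rewrite axy (negPf (fixed_noncollinear ab ya yb fy)) (negPf (fixed_noncollinear ab xa xb fx)).
  by case: (collinear b x y).
have aJ : a \notin J.
  by apply: contraNN bK => aJ; rewrite (eq_lines_of3 KB JB ax ay xy aK xK yK aJ xJ yJ).
case: (boolP (z \in J)) => zJ.
  by apply: (perm_imset_line KB JB ax ay az xy xz yz aK xK yK zK); rewrite ?moveL ?fx ?fy ?fz.
have J'B := symdiff_line JB KB xy xJ yJ xK yK bJ bK.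
have /negP [] := fixed_noncollinear ab za zb fz.
apply/collinearP; exists (symdiff J K) => //.
by rewrite !in_symdiff aK bJ zK (negPf aJ) (negPf bK) (negPf zJ).
Qed.

(* The image of K is K + Lx + Ly + Lz, built one line at a time. *)
Lemma imset_line_all_moved : s x != x -> s y != y -> s z != z -> s @: K \in B.
Proof.
move=> mx my mz.
have [Lx LxB [aLx bLx xLx x'Lx]] := moved_line ab xa xb mx.
have [Ly LyB [aLy bLy yLy y'Ly]] := moved_line ab ya yb my.
have [Lz LzB [aLz bLz zLz z'Lz]] := moved_line ab za zb mz.
have [yx zx zy] : [/\ y != x, z != x & z != y] by rewrite !(eq_sym z) eq_sym.
have [yLx y'Lx] := off_moved_line LxB LyB aLx bLx xLx aLy bLy yLy xK yK xa ya xy.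
have [zLx z'Lx] := off_moved_line LxB LzB aLx bLx xLx aLz bLz zLz xK zK xa za xz.
have [xLy x'Ly] := off_moved_line LyB LxB aLy bLy yLy aLx bLx xLx yK xK ya xa yx.
have [zLy z'Ly] := off_moved_line LyB LzB aLy bLy yLy aLz bLz zLz yK zK ya za yz.
have [xLz x'Lz] := off_moved_line LzB LxB aLz bLz zLz aLx bLx xLx zK xK za xa zx.
have [yLz y'Lz] := off_moved_line LzB LyB aLz bLz zLz aLy bLy yLy zK yK za ya zy.
have x'K := image_off_K LxB aLx bLx xLx x'Lx xa xb xK.
have y'K := image_off_K LyB aLy bLy yLy y'Ly ya yb yK.
have z'K := image_off_K LzB aLz bLz zLz z'Lz za zb zK.
have inc := (aK, xK, yK, zK, aLx, bLx, xLx, x'Lx, aLy, bLy, yLy, y'Ly, aLz, bLz, zLz, z'Lz).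
have out := (negPf bK, negPf x'K, negPf y'K, negPf z'K, negPf yLx, negPf zLx, negPf xLy,
  negPf zLy, negPf xLz, negPf yLz, negPf x'Ly, negPf x'Lz, negPf y'Lx, negPf y'Lz,
  negPf z'Lx, negPf z'Ly).
have J1B := symdiff_line KB LxB ax aK xK aLx xLx yK yLx.
have J2B : symdiff (symdiff K Lx) Ly \in B.
  apply: (symdiff_line J1B LyB (u := b) (v := y) (w := z));
    by rewrite ?in_symdiff ?inc ?out // eq_sym.
have J3B : symdiff (symdiff (symdiff K Lx) Ly) Lz \in B.
  apply: (symdiff_line J2B LzB (u := a) (v := z) (w := s x));
    by rewrite ?in_symdiff ?inc ?out.
apply: (perm_imset_line KB J3B ax ay az xy xz yz aK xK yK zK);
  by rewrite ?moveL ?in_symdiff ?inc ?out.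
Qed.

End MoveFromLine.

Lemma move_imset_line_through_one a b K : K \in B -> a \in K -> b \notin K ->
  move B a b @: K \in B.
Proof.
move=> KB aK bK.
have [x xK /and3P [xa _ _]] := line_point_off3 a a a KB.
have [y yK /and3P [ya yx _]] := line_point_off3 a x x KB.
have [z zK /and3P [za zx zy]] := line_point_off3 a x y KB.
have [ax ay az] : [/\ a != x, a != y & a != z] by rewrite !(eq_sym a).
have [xy xz yz] : [/\ x != y, x != z & y != z] by rewrite !(eq_sym _ z) eq_sym.
case: (eqVneq (move B a b x) x) => fx; case: (eqVneq (move B a b y) y) => fy;
  case: (eqVneq (move B a b z) z) => fz.
- exact: (imset_line_none_moved (x := x) (y := y) (z := z)).
- by apply: (imset_line_one_moved (x := z) (y := x) (z := y)); rewrite // eq_sym.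
- by apply: (imset_line_one_moved (x := y) (y := x) (z := z)); rewrite // eq_sym.
- by case: (two_moved_absurd (x := y) (y := z) (z := x) KB aK bK); rewrite // eq_sym.
- exact: (imset_line_one_moved (x := x) (y := y) (z := z)).
- by case: (two_moved_absurd (x := x) (y := z) (z := y) KB aK bK); rewrite // eq_sym.
- by case: (two_moved_absurd (x := x) (y := y) (z := z) KB aK bK).
- exact: (imset_line_all_moved (x := x) (y := y) (z := z)).
Qed.

Lemma move_imset_line_through_first a b K : K \in B -> a \in K -> move B a b @: K \in B.
Proof.
move=> KB aK; case: (boolP (b \in K)) => bK; first exact: move_imset_line_through_both.
exact: move_imset_line_through_one.
Qed.

Lemma move_imset_line_collinear_pair a b K u v : K \in B -> a \notin K ->
  u \in K -> v \in K -> u != v -> collinear a u v -> move B a b @: K \in B.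
Proof.
move=> KB aK uK vK uv /collinearP [J JB /and3P [aJ uJ vJ]].
have [j jJ /and3P [ja ju jv]] := line_point_off3 a u v JB.
have jK : j \notin K.
  apply: contraNN aK => jK.
  by rewrite -(eq_lines_of3 JB KB uv _ _ uJ vJ jJ uK vK jK) // eq_sym.
have MB := symdiff_line JB KB uv uJ vJ uK vK aJ aK.
have [aM jM uM] : [/\ a \in symdiff J K, j \in symdiff J K & u \notin symdiff J K].
  by rewrite !in_symdiff aJ jJ uJ uK (negPf aK) (negPf jK).
have sJB := move_imset_line_through_first b JB aJ.
have sMB := move_imset_line_through_first b MB aM.
rewrite -(symdiffK J K) imset_symdiff.
apply: (symdiff_line sJB sMB (u := move B a b a) (v := move B a b j) (w := move B a b u));
  by rewrite ?mem_perm_imset ?(inj_eq perm_inj) 1?eq_sym.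
Qed.

Lemma move_imset_line_avoiding_first a b K : K \in B -> a \notin K -> move B a b @: K \in B.
Proof.
move=> KB aK.
have [x xK _] := line_point_off3 a a a KB.
have [y yK /and3P [yx _ _]] := line_point_off3 x x x KB.
have [z zK /and3P [zx zy _]] := line_point_off3 x y y KB.
have [ax ay az] : [/\ a != x, a != y & a != z] by split; apply: contraNneq aK => ->.
have [xy xz yz] : [/\ x != y, x != z & y != z] by rewrite !(eq_sym _ z) eq_sym.
have pair := move_imset_line_collinear_pair b KB aK.
have := collinear_parity ax ay az xy xz yz.
have -> : collinear x y z by apply/collinearP; exists K; rewrite ?xK ?yK ?zK.
case: (boolP (collinear a y z)) => [ayz _ | _]; first exact: pair yK zK yz ayz.
case: (boolP (collinear a x z)) => [axz _ | _]; first exact: pair xK zK xz axz.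
by case: (boolP (collinear a x y)) => [axy _ | _]; first exact: pair xK yK xy axy.
Qed.

Definition line_preserving (g : {perm T}) := forall K, K \in B -> g @: K \in B.

Lemma move_line_preserving a b : line_preserving (move B a b).
Proof.
move=> K KB; case: (boolP (a \in K)) => aK; first exact: move_imset_line_through_first.
case: (boolP (b \in K)) => bK; last exact: move_imset_line_avoiding_first.
by rewrite moveC; apply: move_imset_line_through_first.
Qed.

Lemma conjg_move (g : {perm T}) x y : line_preserving g -> line_preserving g^-1 ->
  (move B x y) ^ g = move B (g x) (g y).
Proof.
move=> gB giB; case: (eqVneq x y) => [-> | xy]; first by rewrite /move !eqxx conj1g.
have gxy : g x != g y by rewrite (inj_eq perm_inj).
apply/permP => u; rewrite conjgE !permM -[u](permKV g) permK; set v := g^-1 u.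
case: (eqVneq v x) => [-> | vx]; first by rewrite !moveL.
case: (eqVneq v y) => [-> | vy]; first by rewrite !moveR.
have [gvx gvy] : g v != g x /\ g v != g y by rewrite !(inj_eq perm_inj).
case: (boolP (collinear x y v)) => [/collinearP [L LB /and3P [xL yL vL]] | nc].
  have [wL wx wy wv] := move_on_line xy LB xL yL vL vx vy.
  by symmetry; apply: (move_fourth_point gxy (gB L LB)); rewrite ?mem_perm_imset ?(inj_eq perm_inj).
rewrite !move_noncollinear //; apply: contra nc => /collinearP [L LB /and3P [xL yL vL]].
apply/collinearP; exists (g^-1 @: L); first exact: giB.
by rewrite -(permK g x) -(permK g y) -(permK g v) !mem_perm_imset xL yL vL.
Qed.

Lemma conjg_move_move a b x y :
  (move B x y) ^ (move B a b) = move B (move B a b x) (move B a b y).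
Proof. by rewrite conjg_move ?invg_move //; apply: move_line_preserving. Qed.

Lemma conjg_move_shared z q r :
  move B z q * move B z r * move B z q = move B q (move B z q r).
Proof. by have := conjg_move_move z q z r; rewrite moveL conjgE invg_move mulgA. Qed.

Lemma order_mul_moves_shared z q r : z != q -> z != r -> q != r ->
  #[move B z q * move B z r] \in [:: 1; 2; 3]%N.
Proof.
move=> zq zr qr.
have [qz rz rq] : [/\ q != z, r != z & r != q] by rewrite !(eq_sym _ z) (eq_sym r).
have conj_r := conjg_move_shared z q r; have conj_q := conjg_move_shared z r q.
case: (boolP (collinear z q r)) => [/collinearP [L LB /and3P [zL qL rL]] | nc].
  apply/order123_expg2/expg2_mul_conj_involution; first exact: mulg_move_self.
  have [wL wz wq wr] := move_on_line zq LB zL qL rL rz rq.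
  have [qw zw rw] : [/\ q != move B z q r, z != move B z q r & r != move B z q r].
    by split; rewrite eq_sym.
  exact: etrans conj_r (move_on_common_line LB qw qz qr wz wr zr qL wL zL rL).
have fix_r : move B z q r = r by rewrite move_noncollinear.
have fix_q : move B z r q = q by rewrite move_noncollinear // -collinearC23.
apply/order123_expg3/expg3_mul_braided_involutions; try exact: mulg_move_self.
rewrite fix_r in conj_r; rewrite fix_q in conj_q.
by rewrite conj_r conj_q moveC.
Qed.

Lemma order_mul_moves a b c d : #[move B a b * move B c d] \in [:: 1; 2; 3]%N.
Proof.
case: (boolP [exists z, (move B a b z != z) && (move B c d z != z)]).
  case/existsP => z /andP [ez fz].
  rewrite -(move_through_image ez) -(move_through_image fz).
  have [zq zr] : z != move B a b z /\ z != move B c d z by rewrite !(eq_sym z).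
  case: (eqVneq (move B a b z) (move B c d z)) => [-> | qr].
    by rewrite mulg_move_self order1.
  exact: order_mul_moves_shared.
move/existsPn => disj.
have fix_cd t : move B a b t != t -> move B c d t = t.
  by move=> et; apply/eqP; have := disj t; rewrite et /= negbK.
have fix_ab t : move B c d t != t -> move B a b t = t.
  by move=> ft; apply/eqP; have := disj t; rewrite ft andbT negbK.
apply/order123_expg2/expg2_mul_conj_involution; first exact: mulg_move_self.
apply/permP => t; rewrite !permM.
have [et | et] := eqVneq (move B a b t) t.
  rewrite et; have [ft | ft] := eqVneq (move B c d t) t; first by rewrite ft et.
  by rewrite fix_ab // moveK eq_sym.
have eet : move B a b (move B a b t) != move B a b t by rewrite moveK eq_sym.
by rewrite (fix_cd _ eet) moveK fix_cd.
Qed.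

Lemma move_path_cat a (s t : seq T) :
  move_path B a (s ++ t) = move_path B a s * move_path B (last a s) t.
Proof. by elim: s a => [|c s IH] a /=; rewrite ?mul1g // IH mulgA. Qed.

Lemma move_path_of_move c x y : exists t, move_path B c t = move B x y.
Proof.
case: (eqVneq x y) => [<- | xy]; first by exists [::]; rewrite /move eqxx.
case: (eqVneq c x) => [-> | cx]; first by exists [:: y]; rewrite /= mulg1.
case: (eqVneq c y) => [-> | cy]; first by exists [:: x]; rewrite /= mulg1 moveC.
case: (boolP (collinear x y c)) => [/collinearP [L LB /and3P [xL yL cL]] | nc].
  have [wL wx wy wc] := move_on_line xy LB xL yL cL cx cy.
  exists [:: move B x y c]; rewrite /= mulg1.
  by symmetry; apply: (move_on_common_line LB); rewrite // eq_sym.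
have [xc yc] : x != c /\ y != c by rewrite !(eq_sym _ c).
have fix_x : move B c y x = x.
  by rewrite move_noncollinear // collinearC12 collinearC23 collinearC12.
have fix_y : move B c x y = y.
  by rewrite move_noncollinear 1?eq_sym // collinearC12 collinearC23.
exists [:: x; y; c]; rewrite /= mulg1 (moveC y c).
apply: (mulg_braid_cycle (mulg_move_self c y)).
  by rewrite conjg_move_shared fix_y.
by rewrite conjg_move_shared fix_x moveC.
Qed.

Lemma moves_setP e : reflect (exists a b, a != b /\ e = move B a b) (e \in moves_set B).
Proof.
apply: (iffP imsetP) => [[[a b] /= ab ->] | [a [b [ab ->]]]].
  by exists a, b; move: ab; rewrite inE.
by exists (a, b); rewrite ?inE.
Qed.

Lemma in_Linf_mul_move inf g a b : in_Linf B inf g -> in_Linf B inf (g * move B a b).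
Proof.
move=> [s [sn ->]]; have [t Et] := move_path_of_move (last inf s) a b.
exists (s ++ t); split; last by rewrite move_path_cat Et.
by rewrite -size_eq0 size_cat addn_eq0 size_eq0 negb_and sn.
Qed.

Lemma mem_gen_moves inf g : g \in <<moves_set B>> <-> in_Linf B inf g.
Proof.
split => [/gen_prodgP [n [c cE ->]] | [s [_ ->]]].
  elim: n c cE => [|n IH] c cE.
    by rewrite big_ord0; exists [:: inf]; rewrite /= /move eqxx mulg1.
  rewrite big_ord_recr /=; have /moves_setP [a [b [_ ->]]] := cE ord_max.
  by apply: in_Linf_mul_move; apply: IH.
elim: s inf => [|c s IH] a /=; first exact: group1.
rewrite groupM ?IH //; case: (eqVneq a c) => [<- | ac].
  by rewrite /move eqxx group1.
by apply/mem_gen/moves_setP; exists a, c.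
Qed.

Definition line_stabilizer := [set g : {perm T} | all (fun K => g @: K \in B) B].

Lemma line_stabilizerP g : reflect (line_preserving g) (g \in line_stabilizer).
Proof. by rewrite inE; apply: (iffP allP). Qed.

Lemma group_set_line_stabilizer : group_set line_stabilizer.
Proof.
apply/group_setP; split.
  by apply/line_stabilizerP => K KB; rewrite (eq_imset _ (@perm1 _)) imset_id.
move=> g h /line_stabilizerP gB /line_stabilizerP hB; apply/line_stabilizerP => K KB.
by rewrite (eq_imset _ (permM g h)) imset_comp hB ?gB.
Qed.

Canonical line_stabilizer_group := Group group_set_line_stabilizer.

Lemma gen_moves_line_preserving g : g \in <<moves_set B>> -> line_preserving g.
Proof.
move=> gE; apply/line_stabilizerP; apply: subsetP gE.
rewrite (gen_subG _ line_stabilizer_group); apply/subsetP => _ /moves_setP [a [b [_ ->]]].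
exact/line_stabilizerP/move_line_preserving.
Qed.

Lemma line_preserving_aut g : line_preserving g -> is_aut B g.
Proof.
move=> gB; have gBu : uniq [seq g @: L | L <- B].
  by rewrite map_inj_uniq ?uniq_lines //; apply: imset_inj; apply: perm_inj.
have gBsub : {subset [seq g @: L | L <- B] <= B} by move=> _ /mapP [L LB ->]; apply: gB.
have [_ gBE] := uniq_min_size gBu gBsub (eq_leq (esym (size_map _ _))).
exact: uniq_perm gBu uniq_lines gBE.
Qed.

Lemma gen_moves_norm : <<moves_set B>> \subset 'N(moves_set B).
Proof.
rewrite gen_subG; apply/subsetP => _ /moves_setP [c [d [_ ->]]]; rewrite inE.
apply/subsetP => _ /imsetP [_ /moves_setP [a [b [ab ->]]] ->].
rewrite conjg_move_move; apply/moves_setP.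
by exists (move B c d a), (move B c d b); rewrite (inj_eq perm_inj).
Qed.

Lemma order_move a b : a != b -> #[move B a b] = 2.
Proof.
move=> ab; apply: nt_prime_order => //; first by rewrite expgS expg1 mulg_move_self.
by apply: contra ab => /eqP m1; rewrite -[b](moveL a b) m1 perm1.
Qed.

End Design.

Theorem theorem4p2 (T : finType) (B : seq {set T}) (lam : nat) (inf : T) :
  is_2design_4 B lam ->
  supersimple B ->
  prop_triangle B ->
  regular_two_graph (collinear_triples B) ->
  exists G : {group {perm T}},
    (forall g : {perm T}, g \in G <-> in_Linf B inf g) /\
    (forall g : {perm T}, g \in G -> is_aut B g) /\
    three_transposition_group G (moves_set B).
Proof.
move=> [B4 _] Bss Btri Btwo; have aut := line_preserving_aut B4 Bss.
exists <<moves_set B>>%G; split; first exact: mem_gen_moves B4 Bss Btri Btwo inf.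
split; first by move=> g /(gen_moves_line_preserving B4 Bss Btri Btwo) /aut.
split; first by move=> _ /moves_setP [a [b [ab ->]]]; apply: order_move.
split=> //; split=> [e g eE gG | _ _ /moves_setP [a [b [_ ->]]] /moves_setP [c [d [_ ->]]]].
  by rewrite memJ_norm // (subsetP (gen_moves_norm B4 Bss Btri Btwo)).
exact: order_mul_moves.
Qed.
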